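(* Let $d\geq 1$, $p\in[1,\infty)\setminus\{2\}$, and $\lambda_1,\dots,\lambda_d>0$. Then the equation $$\sum_{i=1}^{d}\frac{1-\beta^{3-\frac{1}{p}}\lambda_i}{1+\beta^{\frac{1}{p}}\lambda_i}=0$$ in the variable $\beta$ has exactly one positive root $\beta>0$. *)

From Stdlib Require Import Reals.
Open Scope R_scope.

Fixpoint sum_1_to (d : nat) (f : nat -> R) : R :=
  match d with
  | O => 0
  | S k => sum_1_to k f + f (S k)
  end.

(* left-hand side of the equation, for beta > 0 (Rpower x y = x^y, x > 0) *)
Definition eqn_lhs (d : nat) (p : R) (lam : nat -> R) (beta : R) : R :=
  sum_1_to d (fun i =>
    (1 - Rpower beta (3 - 1 / p) * lam i) / (1 + Rpower beta (1 / p) * lam i)).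

(** Write [a = 3 - 1/p] and [b = 1/p], so that [0 < b < a].  Each summand
    [(1 - x^a l) / (1 + x^b l)] is continuous and strictly decreasing on
    [(0, +oo)], positive where [x^a l < 1] and negative where [x^a l > 1].
    Hence the sum is positive for small [x], negative for large [x] and
    strictly decreasing, so by the intermediate value theorem it has exactly
    one positive root. *)

From Stdlib Require Import Reals Lra Lia Psatz.
Open Scope R_scope.

Lemma sum_1_to_0 (d : nat) : sum_1_to d (fun _ => 0) = 0.
Proof. induction d as [|k IH]; simpl; [|rewrite IH]; lra. Qed.

Lemma sum_1_to_le (d : nat) (f g : nat -> R) :
  (forall i, (1 <= i <= d)%nat -> f i <= g i) -> sum_1_to d f <= sum_1_to d g.
Proof.
  induction d as [|k IH]; intros Hfg; simpl; [lra|].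
  assert (sum_1_to k f <= sum_1_to k g) by (apply IH; intros; apply Hfg; lia).
  assert (f (S k) <= g (S k)) by (apply Hfg; lia).
  lra.
Qed.

Lemma sum_1_to_lt (d : nat) (f g : nat -> R) : (1 <= d)%nat ->
  (forall i, (1 <= i <= d)%nat -> f i < g i) -> sum_1_to d f < sum_1_to d g.
Proof.
  destruct d as [|k]; intros Hd Hfg; [lia|]; simpl.
  assert (sum_1_to k f <= sum_1_to k g)
    by (apply sum_1_to_le; intros; left; apply Hfg; lia).
  assert (f (S k) < g (S k)) by (apply Hfg; lia).
  lra.
Qed.

Lemma continuity_pt_sum_1_to (d : nat) (g : nat -> R -> R) (x : R) :
  (forall i, (1 <= i <= d)%nat -> continuity_pt (g i) x) ->
  continuity_pt (fun y => sum_1_to d (fun i => g i y)) x.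
Proof.
  induction d as [|k IH]; intros Hg; simpl.
  - apply continuity_pt_const; intros u v; reflexivity.
  - apply (continuity_pt_plus (fun y => sum_1_to k (fun i => g i y)) (g (S k))).
    + apply IH; intros; apply Hg; lia.
    + apply Hg; lia.
Qed.

Lemma finite_family_upper_bound (d : nat) (g : nat -> R) :
  exists B, 0 < B /\ forall i, (1 <= i <= d)%nat -> g i < B.
Proof.
  induction d as [|k [B [HB HgB]]].
  - exists 1; split; [lra | intros; lia].
  - exists (Rmax B (g (S k) + 1)); split.
    + pose proof (Rmax_l B (g (S k) + 1)); lra.
    + intros i Hi; pose proof (Rmax_l B (g (S k) + 1));
        pose proof (Rmax_r B (g (S k) + 1)).
      destruct (Nat.eq_dec i (S k)) as [->|Hne]; [lra|].
      assert (g i < B) by (apply HgB; lia); lra.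
Qed.

Lemma Rpower_pos (x c : R) : 0 < Rpower x c.
Proof. apply exp_pos. Qed.

Lemma Rpower_onto (a c : R) : 0 < a -> 0 < c -> exists x, 0 < x /\ Rpower x a = c.
Proof.
  intros Ha Hc; exists (Rpower c (/ a)); split; [apply Rpower_pos|].
  rewrite Rpower_mult, Rinv_l, Rpower_1; lra.
Qed.

Lemma continuity_pt_Rpower (c x : R) : 0 < x -> continuity_pt (fun y => Rpower y c) x.
Proof.
  intros Hx; apply derivable_continuous_pt.
  exact (exist _ _ (derivable_pt_lim_power x c Hx)).
Qed.

Lemma decreasing_unique_root (f : R -> R) (x0 x1 : R) :
  (forall x, 0 < x -> continuity_pt f x) ->
  (forall x y, 0 < x < y -> f y < f x) ->
  0 < x0 -> 0 < f x0 -> 0 < x1 -> f x1 < 0 ->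
  exists! z, 0 < z /\ f z = 0.
Proof.
  intros Hcont Hdecr Hx0 Hf0 Hx1 Hf1.
  assert (Hlt : x0 < x1).
  { destruct (Rlt_or_le x0 x1) as [|Hle]; [assumption|].
    destruct Hle as [Hlt|<-]; [|lra].
    assert (f x0 < f x1) by (apply Hdecr; lra); lra. }
  destruct (Ranalysis5.IVT_interv (fun x => - f x) x0 x1) as [z [Hz Hfz]];
    try (simpl; lra).
  { intros y Hy; apply continuity_pt_opp, Hcont; lra. }
  exists z; split; [split; lra|].
  intros y [Hy Hfy].
  destruct (Rtotal_order z y) as [Hzy|[Hzy|Hzy]]; [|assumption|].
  - assert (f y < f z) by (apply Hdecr; lra); lra.
  - assert (f z < f y) by (apply Hdecr; lra); lra.
Qed.

Definition frac_term (a b l x : R) : R :=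
  (1 - Rpower x a * l) / (1 + Rpower x b * l).

Lemma frac_lt_frac (l u v U V : R) : 0 < l -> 0 < u < U -> 0 < v < V ->
  (1 - U * V * l) / (1 + V * l) < (1 - u * v * l) / (1 + v * l).
Proof.
  intros Hl Hu Hv.
  assert (Hv' : 0 < 1 + v * l) by nra.
  assert (HV' : 0 < 1 + V * l) by nra.
  apply Rmult_lt_reg_r with ((1 + v * l) * (1 + V * l)); [nra|].
  replace ((1 - U * V * l) / (1 + V * l) * ((1 + v * l) * (1 + V * l)))
    with ((1 - U * V * l) * (1 + v * l)) by (field; lra).
  replace ((1 - u * v * l) / (1 + v * l) * ((1 + v * l) * (1 + V * l)))
    with ((1 - u * v * l) * (1 + V * l)) by (field; lra).
  assert (0 < v * V) by nra.
  assert (u * v < U * V) by nra.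
  assert (v * V * (u - U) < 0) by nra.
  nra.
Qed.

Lemma frac_term_decreasing (a b l x y : R) : 0 < b < a -> 0 < l -> 0 < x < y ->
  frac_term a b l y < frac_term a b l x.
Proof.
  intros Hab Hl Hxy; unfold frac_term.
  replace a with ((a - b) + b) by ring; rewrite !Rpower_plus.
  apply frac_lt_frac; auto; split; try apply Rpower_pos;
    apply Rlt_Rpower_l; lra.
Qed.

Lemma frac_term_pos (a b l x : R) : 0 < l -> Rpower x a * l < 1 -> 0 < frac_term a b l x.
Proof.
  intros Hl Hx; unfold frac_term; pose proof (Rpower_pos x b).
  apply Rdiv_lt_0_compat; nra.
Qed.

Lemma frac_term_neg (a b l x : R) : 0 < l -> 1 < Rpower x a * l -> frac_term a b l x < 0.
Proof.
  intros Hl Hx; unfold frac_term; pose proof (Rpower_pos x b).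
  apply Rmult_neg_pos; [lra|]; apply Rinv_0_lt_compat; nra.
Qed.

Lemma continuity_pt_frac_term (a b l x : R) : 0 < l -> 0 < x ->
  continuity_pt (frac_term a b l) x.
Proof.
  intros Hl Hx; unfold frac_term; pose proof (Rpower_pos x b).
  assert (Hconst : forall c, continuity_pt (fun _ => c) x)
    by (intro c; apply continuity_pt_const; intros u v; reflexivity).
  apply (continuity_pt_div (fun y => 1 - Rpower y a * l) (fun y => 1 + Rpower y b * l));
    [ apply (continuity_pt_minus (fun _ => 1) (fun y => Rpower y a * l))
    | apply (continuity_pt_plus (fun _ => 1) (fun y => Rpower y b * l))
    | nra ];
    auto; apply (continuity_pt_mult (fun y => Rpower y _) (fun _ => l));
    auto using continuity_pt_Rpower.
Qed.

Lemma sum_frac_term_unique_root (d : nat) (a b : R) (lam : nat -> R) :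
  (1 <= d)%nat -> 0 < b < a -> (forall i, (1 <= i <= d)%nat -> 0 < lam i) ->
  exists! x, 0 < x /\ sum_1_to d (fun i => frac_term a b (lam i) x) = 0.
Proof.
  intros Hd Hab Hlam.
  destruct (finite_family_upper_bound d lam) as [B [HB HlamB]].
  destruct (finite_family_upper_bound d (fun i => / lam i)) as [C [HC HlamC]].
  destruct (Rpower_onto a (/ B)) as [x0 [Hx0 Hx0a]];
    [lra | apply Rinv_0_lt_compat; lra |].
  destruct (Rpower_onto a C) as [x1 [Hx1 Hx1a]]; [lra | lra |].
  apply decreasing_unique_root with x0 x1; auto.
  - intros x Hx; apply continuity_pt_sum_1_to; intros i Hi.
    apply continuity_pt_frac_term; auto.
  - intros x y Hxy; apply sum_1_to_lt; auto; intros i Hi.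
    apply frac_term_decreasing; auto.
  - rewrite <- (sum_1_to_0 d); apply sum_1_to_lt; auto; intros i Hi.
    pose proof (Hlam i Hi); pose proof (HlamB i Hi).
    apply frac_term_pos; auto; rewrite Hx0a.
    apply (Rmult_lt_reg_l B); [lra|]; field_simplify; lra.
  - rewrite <- (sum_1_to_0 d); apply sum_1_to_lt; auto; intros i Hi.
    pose proof (Hlam i Hi); pose proof (HlamC i Hi).
    apply frac_term_neg; auto; rewrite Hx1a.
    replace 1 with (/ lam i * lam i) by (field; lra).
    apply Rmult_lt_compat_r; lra.
Qed.

Theorem theorem2 (d : nat) (p : R) (lam : nat -> R) :
  (1 <= d)%nat -> 1 <= p -> p <> 2 ->
  (forall i : nat, (1 <= i <= d)%nat -> 0 < lam i) ->
  exists! beta : R, 0 < beta /\ eqn_lhs d p lam beta = 0.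
Proof.
  intros Hd Hp _ Hlam.
  assert (Hb : 0 < 1 / p <= 1).
  { split; [apply Rdiv_lt_0_compat; lra|].
    apply (Rmult_le_reg_r p); [lra|]; field_simplify; lra. }
  exact (sum_frac_term_unique_root d (3 - 1 / p) (1 / p) lam Hd
           ltac:(lra) Hlam).
Qed.
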